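(* Let $(X,d)$, $(\Lambda,d_\Lambda)$ be compact metric spaces, $\tau:\Lambda\times X\to X$ continuous and $q:X\to\mathcal P(\Lambda)$ continuous. Assume: (M1) there is $s>0$ such that $\int_\Lambda|f(\tau(\lambda,x))-f(\tau(\lambda,y))|\,dq_x(\lambda)\le s\,d(x,y)$ for all $x,y\in X$ and all $f\in\mathrm{Lip}_1(X)$; (H2) there is $r\ge0$ with $d(\tau(\lambda_1,x),\tau(\lambda_2,x))\le r\,d_\Lambda(\lambda_1,\lambda_2)$ for all $\lambda_1,\lambda_2\in\Lambda$, $x\in X$; (H3) there is $t\ge0$ with $d_{MK}(q_x,q_y)\le t\,d(x,y)$ for all $x,y\in X$. Then $T_q$ is $(s+r t)$-Lipschitz with respect to $d_{MK}$ on $\mathcal P(X)$.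
   Context: $\mathcal{P}(Y)$ is the set of Borel probability measures on a compact metric space $Y$, with $d_{MK}(\mu,\nu)=\sup_{f\in \mathrm{Lip}_1(Y)}\{\int f\,d\mu-\int f\,d\nu\}$, where $\mathrm{Lip}_1(Y)$ is the set of real $1$-Lipschitz functions on $Y$. The transfer operator is $B_q(f)(x)=\int_\Lambda f(\tau(\lambda,x))\,dq_x(\lambda)$ and the Markov operator $T_q$ on $\mathcal P(X)$ is defined by $\int f\,dT_q(\mu)=\int B_q(f)\,d\mu$ for $f\in C(X)$. *)

From HB Require Import structures.
From mathcomp Require Import all_boot all_order all_algebra.
From mathcomp Require Import all_classical all_reals all_analysis.
Set Implicit Arguments. Unset Strict Implicit. Unset Printing Implicit Defensive.
Import Order.TTheory GRing.Theory Num.Theory.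
Import numFieldNormedType.Exports.
Local Open Scope classical_set_scope.
Local Open Scope ring_scope.

(* Nonempty (pointed) metric spaces: join of the library's metricType and
   pointedType (measurable types in MathComp-Analysis must be pointed). *)
#[short(type="pmetricType")]
HB.structure Definition PointedMetric (R : numDomainType) :=
  {M of Pointed M & Metric R M}.

Definition borel {R : realType} (X : pmetricType R)
  : measurableType (@open X).-sigma := g_sigma_algebraType (@open X).

Definition Prob {R : realType} (X : pmetricType R) := probability (borel X) R.

Definition Lip1 {R : realType} (X : pmetricType R) : set (X -> R) :=
  [set f | forall x y : X, `|f x - f y| <= mdist x y].
Arguments Lip1 {R} X.

Definition dMK {R : realType} (X : pmetricType R) (mu nu : Prob X) : \bar R :=
  ereal_sup [set (\int[mu]_x (f x)%:E - \int[nu]_x (f x)%:E)%E | f in Lip1 X].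

Definition Bq {R : realType} (X L : pmetricType R) (tau : L -> X -> X)
  (q : X -> Prob L) (f : X -> R) (x : X) : \bar R :=
  (\int[q x]_l (f (tau l x))%:E)%E.

(* Tmu is T_q(mu): \int f dT_q(mu) = \int B_q(f) dmu for all f in C(X). *)
Definition IsTq {R : realType} (X L : pmetricType R) (tau : L -> X -> X)
  (q : X -> Prob L) (mu Tmu : Prob X) : Prop :=
  forall f : X -> R, continuous f ->
    (\int[Tmu]_x (f x)%:E = \int[mu]_x Bq tau q f x)%E.

(* For f in Lip_1(X), the function g x := \int f (tau l x) dq_x(l), which is
   B_q f, is (s + r t)-Lipschitz.  Indeed g x - g y is the sum of
   \int (f (tau l x) - f (tau l y)) dq_x, at most s d(x,y) by (M1), and of
   \int f (tau l y) d(q_x - q_y), at most r d_MK(q_x, q_y) <= r t d(x,y)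
   because l |-> f (tau l y) is r-Lipschitz by (H2).  Hence
   \int f dT_q(mu) - \int f dT_q(nu) = \int g dmu - \int g dnu
   <= (s + r t) d_MK(mu, nu). *)

From HB Require Import structures.
From mathcomp Require Import all_boot all_order all_algebra.
From mathcomp Require Import all_classical all_reals all_analysis.
From mathcomp Require Import measurable_realfun.
Import Order.TTheory GRing.Theory Num.Theory.
Import numFieldNormedType.Exports.
Local Open Scope classical_set_scope.
Local Open Scope ring_scope.
Set Implicit Arguments.
Unset Strict Implicit.

Section Lipschitz.
Context {R : realType} {X : pmetricType R}.

Definition Lip (k : R) : set (X -> R) :=
  [set f | forall x y : X, `|f x - f y| <= k * mdist x y].

Lemma Lip1_Lip (f : X -> R) : Lip1 X f -> Lip 1 f.
Proof. by move=> f1 x y; rewrite mul1r. Qed.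

Lemma Lip_sub_le (k : R) (f : X -> R) :
  (forall x y, f x - f y <= k * mdist x y) -> Lip k f.
Proof.
move=> fk x y; rewrite ler_norml fk andbT.
by rewrite lerNl opprB metric_sym fk.
Qed.

Lemma Lip_continuous (k : R) (f : X -> R) : Lip k f -> continuous f.
Proof.
move=> fk x; apply/cvgrPdist_lt => e e0.
apply/nbhs_ballP; exists (e / (`|k| + 1)); first by rewrite /= divr_gt0.
move=> y; rewrite ballEmdist /= ltr_pdivlMr ?ltr_wpDl // => xy.
have dxy0 := mdist_ge0 x y.
apply: le_lt_trans (fk x y) _; apply: le_lt_trans xy.
rewrite mulrC; apply: ler_wpM2l => //.
by apply: le_trans (ler_norm k) _; rewrite lerDl.
Qed.

Lemma Lip0_cst (f : X -> R) : Lip 0 f -> forall x y, f x = f y.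
Proof.
by move=> f0 x y; apply/eqP; rewrite -subr_eq0 -normr_le0 -(mul0r (mdist x y)).
Qed.

Lemma Lip_scale_Lip1 (k : R) (f : X -> R) :
  0 < k -> Lip k f -> Lip1 X (fun x => k^-1 * f x).
Proof.
move=> k0 fk x y; rewrite -mulrBr normrM gtr0_norm ?invr_gt0 //.
by rewrite ler_pdivrMl.
Qed.

End Lipschitz.

Section ContinuousIntegral.
Context {R : realType} {X : pmetricType R}.

Lemma continuous_borel_measurable (f : X -> R) :
  continuous f -> measurable_fun [set: borel X] f.
Proof.
move=> /continuousP cf; apply: (measurability _ (RGenOpens.measurableE R)).
move=> _ [_ [a [b ->] <-]]; rewrite setTI.
by apply: sub_sigma_algebra; apply: cf; exact: interval_open.
Qed.

Hypothesis cX : compact [set: X].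

Lemma continuous_integrable (P : Prob X) (f : X -> R) :
  continuous f -> P.-integrable setT (EFin \o f).
Proof.
move=> cf; apply: measurable_bounded_integrable.
- exact: measurableT.
- by rewrite /= probability_setT ltry.
- exact: continuous_borel_measurable.
have /compact_bounded [M [Mr fM]] : compact (f @` [set: X]).
  by apply: continuous_compact cX; exact: continuous_subspaceT.
by exists M; split => // y My x _; apply: fM My _ _; exists x.
Qed.

Lemma continuous_RintegralE (P : Prob X) (f : X -> R) : continuous f ->
  (\int[P]_x f x)%:E = (\int[P]_x (f x)%:E)%E.
Proof.
by move=> cf; rewrite fineK //; exact/integrable_fin_num/continuous_integrable.
Qed.

Lemma Lip_Rintegral_sub_le_dMK (P Q : Prob X) (k : R) (f : X -> R) :
  0 <= k -> Lip k f ->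
  ((\int[P]_x f x - \int[Q]_x f x)%:E <= k%:E * dMK P Q)%E.
Proof.
rewrite le_eqVlt => /predU1P[<- f0|k0 fk].
  have fE (S : Prob X) : \int[S]_x f x = f point.
    under eq_Rintegral do rewrite (Lip0_cst f0 _ point).
    by rewrite Rintegral_cst // /= probability_setT mulr1.
  by rewrite !fE subrr mul0e.
have cf := Lip_continuous fk.
pose g x := k^-1 * f x.
have cg : continuous g by move=> x; apply: cvgM; [exact: cvg_cst|exact: cf].
have gE (S : Prob X) : \int[S]_x g x = k^-1 * \int[S]_x f x.
  by apply: RintegralZl => //; exact: continuous_integrable.
have : ((\int[P]_x g x)%:E - (\int[Q]_x g x)%:E <= dMK P Q)%E.
  rewrite !continuous_RintegralE //.
  by apply: ereal_sup_ubound; exists g => //; exact: Lip_scale_Lip1.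
rewrite -EFinB !gE -mulrBr => /(lee_wpmul2l (ltW k0 : (0 <= k%:E)%E)).
by rewrite -EFinM mulrA mulfV ?gt_eqF // mul1r.
Qed.

End ContinuousIntegral.

Section Transfer.
Context {R : realType} {X L : pmetricType R}.
Variables (tau : L -> X -> X) (q : X -> Prob L) (s r t : R).
Hypothesis cL : compact [set: L].
Hypothesis avg_contract : forall (x y : X) (f : X -> R), Lip1 X f ->
  (\int[q x]_l (`|f (tau l x) - f (tau l y)|)%:E <= (s * mdist x y)%:E)%E.
Hypothesis r0 : 0 <= r.
Hypothesis tau_Lip :
  forall l1 l2 x, mdist (tau l1 x) (tau l2 x) <= r * mdist l1 l2.
Hypothesis q_Lip : forall x y, (dMK (q x) (q y) <= (t * mdist x y)%:E)%E.

Definition transfer (f : X -> R) (x : X) : R := \int[q x]_l f (tau l x).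

Lemma tau_section_Lip (f : X -> R) (y : X) :
  Lip1 X f -> Lip r (fun l => f (tau l y)).
Proof. by move=> f1 l1 l2; apply: le_trans (f1 _ _) (tau_Lip _ _ _). Qed.

Lemma BqE (f : X -> R) : Lip1 X f -> Bq tau q f = fun x => (transfer f x)%:E.
Proof.
move=> f1; apply/funext => x.
by rewrite continuous_RintegralE //; exact: Lip_continuous (tau_section_Lip x f1).
Qed.

Lemma transfer_sub_le (f : X -> R) (x y : X) : Lip1 X f ->
  transfer f x - transfer f y <= (s + r * t) * mdist x y.
Proof.
move=> f1; have ctau z : continuous (fun l => f (tau l z)).
  exact: Lip_continuous (tau_section_Lip z f1).
pose moved := \int[q x]_l (f (tau l x) - f (tau l y)).
pose reweighted := \int[q x]_l f (tau l y) - \int[q y]_l f (tau l y).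
have -> : transfer f x - transfer f y = moved + reweighted.
  rewrite /moved /reweighted RintegralB //; try exact: continuous_integrable.
  by rewrite /transfer addrA subrK.
rewrite mulrDl; apply: lerD.
- apply: le_trans (ler_norm _) _; apply: le_trans (le_normr_Rintegral _ _) _ => //.
    exact: continuous_integrable (fun l => cvgB (ctau x l) (ctau y l)).
  rewrite -lee_fin continuous_RintegralE //; first exact: avg_contract.
  by move=> l; apply: cvg_norm; exact: cvgB (ctau x l) (ctau y l).
- rewrite -lee_fin.
  apply: le_trans (Lip_Rintegral_sub_le_dMK cL _ _ r0 (tau_section_Lip y f1)) _.
  by rewrite -mulrA EFinM lee_wpmul2l ?lee_fin.
Qed.

Lemma transfer_Lip (f : X -> R) : Lip1 X f -> Lip (s + r * t) (transfer f).
Proof. by move=> f1; apply: Lip_sub_le => x y; exact: transfer_sub_le. Qed.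

End Transfer.

Unset Implicit Arguments.

Theorem mainTheorem5 (R : realType) (X L : pmetricType R)
  (tau : L -> X -> X) (q : X -> Prob L) (s r t : R) :
  compact [set: X] -> compact [set: L] ->
  continuous (fun p : L * X => tau p.1 p.2) ->
  (* continuity of q into P(L) with the weak topology *)
  (forall g : L -> R, continuous g ->
     continuous (fun x : X => (\int[q x]_l (g l)%:E)%E)) ->
  (* (M1) *)
  0 < s ->
  (forall (x y : X) (f : X -> R), Lip1 X f ->
     (\int[q x]_l (`|f (tau l x) - f (tau l y)|)%:E <= (s * mdist x y)%:E)%E) ->
  (* (H2) *)
  0 <= r ->
  (forall (l1 l2 : L) (x : X), mdist (tau l1 x) (tau l2 x) <= r * mdist l1 l2) ->
  (* (H3) *)
  0 <= t ->
  (forall x y : X, (dMK (q x) (q y) <= (t * mdist x y)%:E)%E) ->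
  (* conclusion: T_q is (s + r t)-Lipschitz for d_MK *)
  forall mu nu Tmu Tnu : Prob X,
    IsTq tau q mu Tmu -> IsTq tau q nu Tnu ->
    (dMK Tmu Tnu <= (s + r * t)%:E * dMK mu nu)%E.
Proof.
(* Continuity of the integrands follows from the Lipschitz bounds. *)
move=> cX cL _ _ s0 M1 r0 H2 t0 H3 mu nu Tmu Tnu Tq_mu Tq_nu.
apply: ge_ereal_sup => _ [f f1 <-].
have cf := Lip_continuous (Lip1_Lip f1).
have gLip := transfer_Lip cL M1 r0 H2 H3 f1.
rewrite Tq_mu // Tq_nu // (BqE q cL H2 f1) -!continuous_RintegralE //;
  try exact: Lip_continuous gLip.
apply: Lip_Rintegral_sub_le_dMK => //.
by rewrite addr_ge0 ?mulr_ge0 // ltW.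
Qed.
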